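(* If $X$ is a prime permutation graph, then ${\rm Aut}(X)$ is isomorphic to a subgroup of $\mathbb{Z}_2^2$.
   Context: A permutation graph is a graph $X$ such that both $X$ and its complement $\overline X$ are comparability graphs (have transitive orientations). A module of $X$ is a set $M\subseteq V(X)$ such that every vertex outside $M$ is adjacent to all of $M$ or to none; $X$ is prime if its only modules are $V(X)$ and singletons. *)

From mathcomp Require Import all_boot all_order all_algebra all_fingroup.
Set Implicit Arguments. Unset Strict Implicit. Unset Printing Implicit Defensive.
Import GroupScope.

Definition simple_graph (T : finType) (adj : rel T) :=
  symmetric adj /\ irreflexive adj.

Definition complement_graph (T : finType) (adj : rel T) : rel T :=
  fun x y => (x != y) && ~~ adj x y.

Definition transitive_orientation (T : finType) (adj : rel T) (o : rel T) :=
  [/\ forall x y, o x y -> adj x y,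
      forall x y, adj x y -> (o x y || o y x),
      forall x y, o x y -> ~~ o y x
    & transitive o].

Definition comparability_graph (T : finType) (adj : rel T) :=
  exists o : rel T, transitive_orientation adj o.

Definition permutation_graph (T : finType) (adj : rel T) :=
  comparability_graph adj /\ comparability_graph (complement_graph adj).

Definition is_module (T : finType) (adj : rel T) (M : {set T}) :=
  forall v, v \notin M ->
    (forall m, m \in M -> adj v m) \/ (forall m, m \in M -> ~~ adj v m).

Definition prime_graph (T : finType) (adj : rel T) :=
  forall M : {set T}, is_module adj M -> M = setT \/ #|M| <= 1.

Definition aut_set (T : finType) (adj : rel T) : {set {perm T}} :=
  [set p : {perm T} | [forall x, [forall y, adj (p x) (p y) == adj x y]]].

Lemma aut_group_set (T : finType) (adj : rel T) : group_set (aut_set adj).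
Proof.
apply/group_setP; split.
  by rewrite inE; apply/forallP => x; apply/forallP => y; rewrite !perm1.
move=> p q; rewrite !inE => /forallP Hp /forallP Hq.
apply/forallP => x; apply/forallP => y; rewrite !permM.
by rewrite (eqP (forallP (Hq (p x)) (p y))) (eqP (forallP (Hp x) y)).
Qed.

Canonical aut_group (T : finType) (adj : rel T) := Group (aut_group_set adj).

Definition Z2sq := ('Z_2 * 'Z_2)%type.

From mathcomp Require Import all_boot all_order all_algebra all_fingroup.
From Stdlib Require Import Classical ClassicalEpsilon.
Set Implicit Arguments. Unset Strict Implicit. Unset Printing Implicit Defensive.
Import GroupScope.

(* In a prime graph all edges lie in a single colour class (the closure of
   one edge under reversal and Gallai's Gamma relation), and transitive
   orientations are constant on colour classes up to reversal; hence a prime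
   comparability graph has exactly two transitive orientations, o and its
   reverse.  An automorphism g maps o to o or to its reverse, which gives a
   homomorphism Aut(X) -> Z_2; doing the same for the complement gives a
   homomorphism Aut(X) -> Z_2 x Z_2.  Its kernel is trivial: an automorphism
   preserving a transitive orientation o of X and q of its complement
   preserves the strict linear order o \/ q, so it is the identity. *)

Section Forcing.
Variables (T : finType) (adj : rel T).
Hypotheses (adj_sym : symmetric adj) (adj_irr : irreflexive adj).
Hypothesis adj_prime : prime_graph adj.

(* Gamma relates (x, y) to (x, z) when y != z are non-adjacent; [forced x0 y0]
   is the colour class of the oriented edge (x0, y0). *)
Inductive forced (x0 y0 : T) : T -> T -> Prop :=
| forced_refl : forced x0 y0 x0 y0
| forced_rev x y : forced x0 y0 x y -> forced x0 y0 y x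
| forced_gamma x y z : forced x0 y0 x y -> adj x z -> y != z -> ~~ adj y z ->
    forced x0 y0 x z.

Lemma forced_adj x0 y0 x y : adj x0 y0 -> forced x0 y0 x y -> adj x y.
Proof.
by move=> e0; elim=> [|u v _ uv|u v w _ _ uw _ _] //; rewrite adj_sym.
Qed.

Lemma forced_trans x0 y0 x1 y1 x y :
  forced x0 y0 x1 y1 -> forced x1 y1 x y -> forced x0 y0 x y.
Proof.
move=> f01; elim=> [|u v _ fuv|u v w _ fuv uw vw nvw] //.
  exact: forced_rev.
exact: forced_gamma fuv uw vw nvw.
Qed.

Lemma forced_sym x0 y0 x y : adj x0 y0 -> forced x0 y0 x y -> forced x y x0 y0.
Proof.
move=> e0; elim=> [|u v _ fvu|u v w fuv fwu uw vw nvw].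
- exact: forced_refl.
- exact: forced_trans (forced_rev (forced_refl _ _)) fvu.
- apply: forced_trans fwu; apply: forced_gamma (forced_refl _ _) _ _ _.
  + exact: forced_adj fuv.
  + by rewrite eq_sym.
  + by rewrite adj_sym.
Qed.

Lemma forced_nbr_const x0 y0 v : (forall w, ~ forced x0 y0 v w) ->
  forall x y, forced x0 y0 x y -> adj v x = adj v x0.
Proof.
move=> v_out.
have nbr_edge x y : forced x0 y0 x y -> adj v x -> adj v y.
  move=> fxy vx; apply/negPn/negP => nvy.
  have yv : y != v.
    by apply/eqP => yv; apply: (v_out x); rewrite -yv; apply: forced_rev.
  apply: (v_out x); apply: forced_rev.
  by apply: forced_gamma fxy _ yv _; rewrite adj_sym.
move=> x y; elim=> [|u w fuw IH|//] //.
apply/idP/idP => [/(nbr_edge _ _ (forced_rev fuw))|]; rewrite -IH //.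
exact: nbr_edge.
Qed.

(* The endpoints of a colour class form a module with at least two vertices. *)
Lemma forced_cover x0 y0 : adj x0 y0 -> forall u, exists w, forced x0 y0 u w.
Proof.
move=> e0.
pose M := [set u | excluded_middle_informative (exists w, forced x0 y0 u w)].
have inM u : reflect (exists w, forced x0 y0 u w) (u \in M).
  by rewrite inE; apply: sumboolP.
have M_module : is_module adj M.
  move=> v /inM v_out.
  have nbrM m : m \in M -> adj v m = adj v x0.
    by case/inM=> w; apply: forced_nbr_const => w' vw'; apply: v_out; exists w'.
  by case: (boolP (adj v x0)) => vx0; [left|right] => m /nbrM ->.
have x0M : x0 \in M by apply/inM; exists y0; apply: forced_refl.
have y0M : y0 \in M by apply/inM; exists x0; apply/forced_rev/forced_refl.
case: (adj_prime M_module) => [MT u|small]; first by apply/inM; rewrite MT inE.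
have x0y0 : x0 != y0 by apply: contraTneq e0 => ->; rewrite adj_irr.
have : #|[set x0; y0]| <= #|M| by apply/subset_leq_card/subsetP => z /set2P [] ->.
by rewrite cards2 x0y0 => /leq_trans/(_ small).
Qed.

(* Otherwise a would be adjacent to every endpoint of the colour class of
   (b, c), hence, by [forced_cover], to itself. *)
Lemma forced_triangle a b c : adj a b -> adj b c -> adj a c ->
  forced b c a b \/ forced b c a c.
Proof.
move=> ab bc ac; apply: NNPP => /not_or_and [nab nac].
have avoid x y : forced b c x y ->
    [/\ adj a x, adj a y, ~ forced b c a x & ~ forced b c a y].
  elim=> [|u v _ [? ? ? ?]|u w z fuw [au aw nau naw] uz wz nwz] //.
  have az : adj a z.
    apply/negPn/negP => naz; apply: nau; apply: forced_rev.
    have [<-|za] := eqVneq z a; first exact: forced_gamma fuw uz wz nwz.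
    by apply: forced_gamma (forced_gamma fuw uz wz nwz) _ za _; rewrite adj_sym.
  split=> // faz; apply: naw; apply: forced_gamma faz aw _ _.
    by rewrite eq_sym.
  by rewrite adj_sym.
have [w /avoid [aa _ _ _]] := forced_cover bc a.
by rewrite adj_irr in aa.
Qed.

Lemma forced_all x0 y0 x y : adj x0 y0 -> adj x y -> forced x0 y0 x y.
Proof.
move=> e0 xy; have [z fxz] := forced_cover e0 x.
have xz : adj x z := forced_adj e0 fxz.
apply: forced_trans fxz _.
have [<-|y_neq_z] := eqVneq y z; first exact: forced_refl.
have [zy|nzy] := boolP (adj z y); last first.
  by apply: forced_gamma (forced_refl _ _) xy _ nzy; rewrite eq_sym.
have [zx yx yz] : [/\ adj z x, adj y x & adj y z] by split; rewrite adj_sym.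
case: (forced_triangle zx xy zy) => [fzx|fzy].
  exact: forced_trans (forced_rev (forced_refl _ _)) (forced_sym xy fzx).
case: (forced_triangle yx xz yz) => [fyx|fyz]; first exact: forced_rev.
exact: forced_trans (forced_rev fyz) (forced_sym xy fzy).
Qed.

Lemma gamma_invariant_const (P : rel T) x0 y0 :
  (forall x y, adj x y -> P y x = P x y) ->
  (forall x y z, adj x y -> adj x z -> ~~ adj y z -> P x z = P x y) ->
  adj x0 y0 -> forall x y, adj x y -> P x y = P x0 y0.
Proof.
move=> P_rev P_gamma e0 x y /(forced_all e0).
elim=> [|u v fuv IH|u v w fuv IH uw _ nvw] //.
  by rewrite P_rev ?(forced_adj e0 fuv).
by rewrite (P_gamma _ v) ?(forced_adj e0 fuv).
Qed.

End Forcing.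

Lemma aut_groupP (T : finType) (adj : rel T) (g : {perm T}) :
  reflect (forall x y, adj (g x) (g y) = adj x y) (g \in aut_group adj).
Proof.
rewrite inE; apply: (iffP forallP) => [g_aut x y|g_aut x].
  exact/eqP/(forallP (g_aut x)).
by apply/forallP => y; rewrite g_aut.
Qed.

Section Orientation.
Variables (T : finType) (adj o : rel T).
Hypothesis adj_sym : symmetric adj.
Hypothesis o_orient : transitive_orientation adj o.

Lemma orient_nonedge x y : ~~ adj x y -> o x y = false.
Proof. by have [o_adj _ _ _] := o_orient; apply: contraNF => /o_adj. Qed.

Lemma orient_opp x y : adj x y -> o y x = ~~ o x y.
Proof.
have [_ o_tot o_asym _] := o_orient => /o_tot.
by case: (boolP (o x y)) => [/o_asym/negbTE|_ /= ->].
Qed.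

Lemma orient_gamma x y z : adj x y -> adj x z -> ~~ adj y z -> o x z = o x y.
Proof.
have [o_adj _ _ o_trans] := o_orient => xy xz nyz.
have [oxy|oyx] := boolP (o x y).
  move: nyz; apply: contraNT => ozx; rewrite -orient_opp // in ozx.
  by rewrite adj_sym o_adj // (o_trans _ _ _ ozx oxy).
rewrite -orient_opp // in oyx.
by move: nyz; apply: contraNF => oxz; rewrite o_adj // (o_trans _ _ _ oyx oxz).
Qed.

Lemma orient_rev : transitive_orientation adj (fun x y => o y x).
Proof.
have [o_adj o_tot o_asym o_trans] := o_orient.
split=> [x y /o_adj|x y|x y /o_asym //|y x z yx zy]; first by rewrite adj_sym.
  by move/o_tot; rewrite orbC.
exact: o_trans zy yx.
Qed.

Lemma orient_perm (g : {perm T}) : g \in aut_group adj ->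
  transitive_orientation adj (fun x y => o (g x) (g y)).
Proof.
have [o_adj o_tot o_asym o_trans] := o_orient => /aut_groupP g_aut.
split=> [x y /o_adj|x y|x y /o_asym //|y x z]; first by rewrite g_aut.
  by rewrite -g_aut => /o_tot.
exact: o_trans.
Qed.

End Orientation.

Section Flips.
Variables (T : finType) (adj o : rel T).
Hypotheses (adj_sym : symmetric adj) (adj_irr : irreflexive adj).
Hypothesis adj_prime : prime_graph adj.
Hypothesis o_orient : transitive_orientation adj o.

Lemma orientation_unique o' : transitive_orientation adj o' ->
  (forall x y, o' x y = o x y) \/ (forall x y, o' x y = o y x).
Proof.
move=> o'_orient.
have [[x0 y0] /= e0|no_edge] := pickP (fun e : T * T => adj e.1 e.2); last first.
  left=> x y; have nxy : ~~ adj x y by rewrite (no_edge (x, y)).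
  by rewrite (orient_nonedge o'_orient nxy) (orient_nonedge o_orient nxy).
pose agree x y := o' x y == o x y.
have agree_const x y : adj x y -> agree x y = agree x0 y0.
  apply: gamma_invariant_const => // [u v uv|u v w uv uw nvw].
    by rewrite /agree !(orient_opp _ uv) // eqb_negLR negbK.
  by rewrite /agree !(orient_gamma adj_sym _ uv uw nvw).
have [a0|na0] := boolP (agree x0 y0); [left|right] => x y.
  have [xy|nxy] := boolP (adj x y); last first.
    by rewrite (orient_nonedge o'_orient nxy) (orient_nonedge o_orient nxy).
  by apply/eqP; rewrite -/(agree x y) agree_const.
have [xy|nxy] := boolP (adj x y); last first.
  by rewrite (orient_nonedge o'_orient nxy) (orient_nonedge o_orient) // adj_sym.
move: (agree_const x y xy); rewrite (negbTE na0) (orient_opp o_orient xy) /agree.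
by case: (o' x y); case: (o x y).
Qed.

Definition flips (g : {perm T}) :=
  [exists x, exists y, adj x y && (o (g x) (g y) != o x y)].

Lemma flips_edge g x y : g \in aut_group adj -> adj x y ->
  o (g x) (g y) = o x y (+) flips g.
Proof.
move=> g_aut xy; case: (orientation_unique (orient_perm o_orient g_aut)) => og.
  suff -> : flips g = false by rewrite og addbF.
  by apply/existsPn => a; apply/existsPn => b; rewrite og eqxx andbF.
suff -> : flips g by rewrite og (orient_opp o_orient xy) addbT.
apply/existsP; exists x; apply/existsP; exists y.
by rewrite xy og (orient_opp o_orient xy); case: (o x y).
Qed.

Lemma flipsM g h : g \in aut_group adj -> h \in aut_group adj ->
  flips (g * h) = flips g (+) flips h.
Proof.
move=> g_aut h_aut.
have [[x y] /= xy|no_edge] := pickP (fun e : T * T => adj e.1 e.2); last first.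
  have no_flips k : flips k = false.
    by apply/existsPn => x; apply/existsPn => y; rewrite (no_edge (x, y)).
  by rewrite !no_flips.
have gxy : adj (g x) (g y) by move/aut_groupP: g_aut ->.
apply: (@addbI (o x y)); rewrite addbA -(flips_edge g_aut xy) -(flips_edge h_aut gxy).
by rewrite -permM -permM -(flips_edge _ xy) ?groupM.
Qed.

Lemma flips_false g : g \in aut_group adj -> flips g = false ->
  forall x y, o (g x) (g y) = o x y.
Proof.
move=> g_aut g_fix x y; have [xy|nxy] := boolP (adj x y).
  by rewrite (flips_edge g_aut xy) g_fix addbF.
by rewrite !(orient_nonedge o_orient) //; move/aut_groupP: g_aut ->.
Qed.

(* As a group 'Z_2 is written multiplicatively: its identity 1 is the residue 0. *)
Definition flip_sign g : 'Z_2 := inZp (flips g).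

Lemma flip_signM : {in aut_group adj &, {morph flip_sign : g h / g * h}}.
Proof.
move=> g h g_aut h_aut; rewrite /flip_sign flipsM //.
by case: (flips g); case: (flips h); apply/val_inj.
Qed.

Lemma flip_sign_eq1 g : g \in aut_group adj -> flip_sign g = 1 ->
  forall x y, o (g x) (g y) = o x y.
Proof.
rewrite /flip_sign => g_aut.
case: (boolP (flips g)) => [_ /(congr1 val) //|/negbTE g_fix _].
exact: flips_false.
Qed.

End Flips.

Section Complement.
Variables (T : finType) (adj : rel T).

Lemma complement_sym : symmetric adj -> symmetric (complement_graph adj).
Proof. by move=> adj_sym x y; rewrite /complement_graph eq_sym adj_sym. Qed.

Lemma complement_irr : irreflexive (complement_graph adj).
Proof. by move=> x; rewrite /complement_graph eqxx. Qed.

Lemma prime_graph_complement : prime_graph adj -> prime_graph (complement_graph adj).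
Proof.
move=> adj_prime M M_module; apply: adj_prime => v vM.
have v_neq m : m \in M -> v != m by move=> mM; apply/eqP => vm; rewrite vm mM in vM.
case: (M_module v vM) => M_nbr; [right|left] => m mM; move: (M_nbr m mM);
  by rewrite /complement_graph v_neq //= ?negbK.
Qed.

Lemma aut_group_complement : irreflexive adj ->
  aut_group (complement_graph adj) =i aut_group adj.
Proof.
move=> adj_irr g; apply/aut_groupP/aut_groupP => g_aut x y.
  have [<-|x_neq_y] := eqVneq x y; first by rewrite !adj_irr.
  move: (g_aut x y); rewrite /complement_graph (inj_eq perm_inj) x_neq_y /=.
  by move/(congr1 negb); rewrite !negbK.
by rewrite /complement_graph g_aut (inj_eq perm_inj).
Qed.

End Complement.

Lemma total_order_perm_eq1 (T : finType) (lt : rel T) (g : {perm T}) :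
  irreflexive lt -> transitive lt -> (forall x y, x != y -> lt x y || lt y x) ->
  (forall x y, lt (g x) (g y) = lt x y) -> g = 1.
Proof.
move=> lt_irr lt_trans lt_total g_lt.
pose rank x := #|[set y | lt y x]|.
have rank_g x : rank (g x) = rank x.
  rewrite /rank -(card_preimset _ (@perm_inj _ g)); apply: eq_card => y.
  by rewrite !inE g_lt.
have rank_lt x y : lt x y -> rank x < rank y.
  move=> xy; apply/proper_card/properP; split.
    by apply/subsetP => z; rewrite !inE => /lt_trans; apply.
  by exists x; rewrite !inE ?lt_irr.
apply/permP => x; rewrite perm1; apply/eqP/negPn/negP => /lt_total.
by case/orP => /rank_lt; rewrite rank_g ltnn.
Qed.

Lemma orient_mixed_trans (T : finType) (adj o q : rel T) x y z :
  symmetric adj -> transitive_orientation adj o ->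
  transitive_orientation (complement_graph adj) q ->
  o x y -> q y z -> o x z || q x z.
Proof.
move=> adj_sym o_orient q_orient oxy qyz.
have [o_adj _ _ o_trans] := o_orient; have [q_adj _ _ q_trans] := q_orient.
have xy := o_adj _ _ oxy; have /andP [_ nyz] := q_adj _ _ qyz.
have [xz|nxz] := boolP (adj x z).
  rewrite -[o x z]negbK -(orient_opp o_orient xz); apply/orP; left.
  by apply: contraNN nyz => ozx; rewrite adj_sym o_adj // (o_trans _ _ _ ozx oxy).
have cxz : complement_graph adj x z.
  by rewrite /complement_graph nxz andbT; apply: contraNneq nyz => <-; rewrite adj_sym.
rewrite -[q x z]negbK -(orient_opp q_orient cxz); apply/orP; right.
apply/negP => qzx; have /q_adj/andP [_] := q_trans _ _ _ qyz qzx.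
by rewrite adj_sym xy.
Qed.

Section LinearOrder.
Variables (T : finType) (adj o q : rel T).
Hypotheses (adj_sym : symmetric adj) (adj_irr : irreflexive adj).
Hypothesis o_orient : transitive_orientation adj o.
Hypothesis q_orient : transitive_orientation (complement_graph adj) q.

Let lt x y := o x y || q x y.

Lemma orient_union_irr : irreflexive lt.
Proof.
have [o_adj _ _ _] := o_orient; have [q_adj _ _ _] := q_orient.
move=> x; apply/norP; split; apply/negP.
  by move/o_adj; rewrite adj_irr.
by move/q_adj; rewrite complement_irr.
Qed.

Lemma orient_union_trans : transitive lt.
Proof.
have [_ _ _ o_trans] := o_orient; have [_ _ _ q_trans] := q_orient.
have o_rev := orient_rev adj_sym o_orient.
have q_rev := orient_rev (complement_sym adj_sym) q_orient.
move=> y x z /orP [xy|xy] /orP [yz|yz]; rewrite /lt.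
- by rewrite (o_trans _ _ _ xy yz).
- exact: orient_mixed_trans adj_sym o_orient q_orient xy yz.
- exact: (orient_mixed_trans adj_sym o_rev q_rev yz xy).
- by rewrite (q_trans _ _ _ xy yz) orbT.
Qed.

Lemma orient_union_total x y : x != y -> lt x y || lt y x.
Proof.
have [_ o_tot _ _] := o_orient; have [_ q_tot _ _] := q_orient.
move=> x_neq_y; have [xy|nxy] := boolP (adj x y).
  by case/orP: (o_tot _ _ xy); rewrite /lt => ->; rewrite ?orbT.
have cxy : complement_graph adj x y by rewrite /complement_graph x_neq_y nxy.
by case/orP: (q_tot _ _ cxy); rewrite /lt => ->; rewrite ?orbT.
Qed.

Lemma orient_pair_perm_eq1 (g : {perm T}) :
  (forall x y, o (g x) (g y) = o x y) -> (forall x y, q (g x) (g y) = q x y) ->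
  g = 1.
Proof.
move=> g_o g_q; apply: total_order_perm_eq1 orient_union_irr orient_union_trans
  orient_union_total _ => x y.
by rewrite /lt g_o g_q.
Qed.

End LinearOrder.

Theorem mainTheorem6 (T : finType) (adj : rel T) :
  simple_graph adj -> permutation_graph adj -> prime_graph adj ->
  exists H : {group Z2sq}, aut_group adj \isog H.
Proof.
move=> [adj_sym adj_irr] [[o o_orient] [q q_orient]] adj_prime.
have cadj_sym := complement_sym adj_sym.
have cadj_irr := @complement_irr _ adj.
have cadj_prime := prime_graph_complement adj_prime.
have autC := aut_group_complement adj_irr.
pose sign g : Z2sq := (flip_sign adj o g, flip_sign (complement_graph adj) q g).
have signM : {in aut_group adj &, {morph sign : g h / g * h}}.
  move=> g h g_aut h_aut; congr (_, _).
    exact: (flip_signM adj_sym adj_irr adj_prime o_orient).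
  by apply: (flip_signM cadj_sym cadj_irr cadj_prime q_orient); rewrite autC.
have sign_inj : 'injm (Morphism signM).
  apply/subsetP => g /[dup] /dom_ker g_aut /(kerP _ g_aut) sign1.
  rewrite inE; apply/eqP/(orient_pair_perm_eq1 adj_sym adj_irr o_orient q_orient).
    exact: (flip_sign_eq1 adj_sym adj_irr adj_prime o_orient g_aut (congr1 fst sign1)).
  apply: (flip_sign_eq1 cadj_sym cadj_irr cadj_prime q_orient _ (congr1 snd sign1)).
  by rewrite autC.
by exists (Morphism signM @* aut_group adj)%G; apply: sub_isog.
Qed.
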